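(* Let $Q$ be a countable quandle which is semi-latin at $\hat q\in Q$, equipped with a circular order or a right order, and let $(q_i)_{i\ge1}$ be an enumeration of $Q$ with $q_1=\hat q$. Then the dynamical realization $\rho$ constructed from $(q_i)$ acts freely on $\iota(\hat q)$, i.e. for $q\ne r$ in $Q$ one has $\rho(q)(\iota(\hat q))\neq\rho(r)(\iota(\hat q))$.
   Context: Quandle: set with operation $*$ satisfying $q*q=q$, unique right division, and $(q*r)*s=(q*s)*(r*s)$. Semi-latin at $\hat q$: $r\mapsto\hat q*r$ is injective. A circular order is $c:Q^3\to\{-1,0,1\}$ vanishing exactly on triples with a repeated entry, satisfying $c(q_2,q_3,q_4)-c(q_1,q_3,q_4)+c(q_1,q_2,q_4)-c(q_1,q_2,q_3)=0$ and $c(q_1*q,q_2*q,q_3*q)=c(q_1,q_2,q_3)$. A right order is a total order with $q_1<q_2\Rightarrow q_1*q<q_2*q$. Dynamical realization (circular case): define $\iota:Q\to S^1$ by choosing distinct $\iota(q_1),\iota(q_2)$ and letting $\iota(q_n)$ be the midpoint of the unique component of $S^1\setminus\{\iota(q_1),\dots,\iota(q_{n-1})\}$ with $c(q_i,q_j,q_k)=\mathrm{ord}(\iota(q_i),\iota(q_j),\iota(q_k))$ for all $i,j,k\le n$ ($\mathrm{ord}$ the standard cyclic orientation). Right order case: $\iota:Q\to\mathbb{R}$, $\iota(q_1)$ arbitrary, $\iota(q_n)$ equal to (minimum previous value)$-1$, (maximum previous value)$+1$, or the midpoint of its immediate neighbours' values according to the position of $q_n$ among $q_1,\dots,q_{n-1}$.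 In both cases $\rho(q)(\iota(r))=\iota(r*q)$ on $\iota(Q)$, extended continuously to the closure and affinely on complementary intervals. *)

From Stdlib Require Import Reals ZArith.
Open Scope R_scope.

Definition is_quandle {Q : Type} (op : Q -> Q -> Q) : Prop :=
  (forall q, op q q = q) /\
  (forall q r, exists! s, op s r = q) /\
  (forall q r s, op (op q r) s = op (op q s) (op r s)).

Definition semi_latin_at {Q : Type} (op : Q -> Q -> Q) (qhat : Q) : Prop :=
  forall r s, op qhat r = op qhat s -> r = s.

Definition is_circular_order {Q : Type} (op : Q -> Q -> Q) (c : Q -> Q -> Q -> Z) : Prop :=
  (forall a b d, c a b d = (-1)%Z \/ c a b d = 0%Z \/ c a b d = 1%Z) /\
  (forall a b d, c a b d = 0%Z <-> (a = b \/ b = d \/ a = d)) /\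
  (forall q1 q2 q3 q4,
      (c q2 q3 q4 - c q1 q3 q4 + c q1 q2 q4 - c q1 q2 q3)%Z = 0%Z) /\
  (forall q1 q2 q3 q, c (op q1 q) (op q2 q) (op q3 q) = c q1 q2 q3).

Definition is_right_order {Q : Type} (op : Q -> Q -> Q) (lt : Q -> Q -> Prop) : Prop :=
  (forall a, ~ lt a a) /\
  (forall a b d, lt a b -> lt b d -> lt a d) /\
  (forall a b, a <> b -> lt a b \/ lt b a) /\
  (forall a b q, lt a b -> lt (op a q) (op b q)).

(** Enumeration of Q indexed by an initial segment D of nat (D = all of nat
    when Q is infinite); index 0 plays the role of the paper's index 1. *)
Definition is_enumeration {Q : Type} (D : nat -> Prop) (e : nat -> Q) : Prop :=
  D 0%nat /\
  (forall n m, (m <= n)%nat -> D n -> D m) /\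
  (forall n m, D n -> D m -> e n = e m -> n = m) /\
  (forall x, exists n, D n /\ e n = x).

(** The circle S^1 = R/Z is represented by [0,1); increasing parameter is the
    standard (counterclockwise) orientation. *)
Definition on_circle (x : R) : Prop := 0 <= x < 1.

Definition ord (a b d : R) : Z :=
  if Req_EM_T a b then 0%Z else if Req_EM_T b d then 0%Z else
  if Req_EM_T a d then 0%Z else
  if Rlt_dec a b then
    (if Rlt_dec b d then 1%Z else if Rlt_dec d a then 1%Z else (-1)%Z)
  else
    (if Rlt_dec b d then (if Rlt_dec d a then 1%Z else (-1)%Z) else (-1)%Z).

(** Midpoint of the counterclockwise open arc from a to b (a <> b) in [0,1). *)
Definition arcmid (a b : R) : R :=
  if Rlt_dec a b then (a + b) / 2
  else let m := (a + b + 1) / 2 in if Rlt_dec m 1 then m else m - 1.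

Definition is_circ_realization {Q : Type} (c : Q -> Q -> Q -> Z)
    (D : nat -> Prop) (e : nat -> Q) (iota : Q -> R) : Prop :=
  (forall x, on_circle (iota x)) /\
  (D 1%nat -> iota (e 0%nat) <> iota (e 1%nat)) /\
  (forall n, (2 <= n)%nat -> D n ->
     exists i j, (i < n)%nat /\ (j < n)%nat /\ iota (e i) <> iota (e j) /\
       (* the ccw arc from iota(e i) to iota(e j) contains no earlier point:
          it is a component of S^1 minus the earlier points *)
       (forall k, (k < n)%nat -> ord (iota (e i)) (iota (e k)) (iota (e j)) <> 1%Z) /\
       iota (e n) = arcmid (iota (e i)) (iota (e j)) /\
       (forall a b d, (a <= n)%nat -> (b <= n)%nat -> (d <= n)%nat ->
          c (e a) (e b) (e d) = ord (iota (e a)) (iota (e b)) (iota (e d)))).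

Definition is_right_realization {Q : Type} (lt : Q -> Q -> Prop)
    (D : nat -> Prop) (e : nat -> Q) (iota : Q -> R) : Prop :=
  forall n, (1 <= n)%nat -> D n ->
    ((forall i, (i < n)%nat -> lt (e n) (e i)) ->
       exists i, (i < n)%nat /\ (forall j, (j < n)%nat -> iota (e i) <= iota (e j)) /\
                 iota (e n) = iota (e i) - 1) /\
    ((forall i, (i < n)%nat -> lt (e i) (e n)) ->
       exists i, (i < n)%nat /\ (forall j, (j < n)%nat -> iota (e j) <= iota (e i)) /\
                 iota (e n) = iota (e i) + 1) /\
    ((exists i, (i < n)%nat /\ lt (e i) (e n)) ->
     (exists j, (j < n)%nat /\ lt (e n) (e j)) ->
       exists i j, (i < n)%nat /\ (j < n)%nat /\ lt (e i) (e n) /\ lt (e n) (e j) /\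
         (forall k, (k < n)%nat ->
            ~ (lt (e i) (e k) /\ lt (e k) (e n)) /\ ~ (lt (e n) (e k) /\ lt (e k) (e j))) /\
         iota (e n) = (iota (e i) + iota (e j)) / 2).

Definition rho_on_image {Q : Type} (op : Q -> Q -> Q) (iota : Q -> R)
    (rho : Q -> R -> R) : Prop :=
  forall q r, rho q (iota r) = iota (op r q).

(* The orbit map q |-> rho q (iota qhat) equals q |-> iota (qhat * q), the composite of
   the left translation by qhat, injective since Q is semi-latin at qhat, with iota.  So
   freeness reduces to the injectivity of iota.  In the circular case iota reproduces
   the circular order on any three of the points placed so far, and c vanishes only on
   triples with a repeated entry, so two distinct points never land at the same place.
   In the right-order case each new point is put below the minimum, above the maximum,
   or at the midpoint of its immediate neighbours, so by induction along the
   enumeration iota is strictly increasing for the order, hence injective. *)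

From Stdlib Require Import Reals ZArith Lia Lra Classical.
Open Scope R_scope.

Lemma enumeration_dom_le {Q : Type} (D : nat -> Prop) (e : nat -> Q) n m :
  is_enumeration D e -> D n -> (m <= n)%nat -> D m.
Proof. intros [_ [Hdown _]] Hn Hmn; exact (Hdown n m Hmn Hn). Qed.

Lemma enumeration_neq {Q : Type} (D : nat -> Prop) (e : nat -> Q) a b :
  is_enumeration D e -> D a -> D b -> a <> b -> e a <> e b.
Proof. intros [_ [_ [Hinj _]]] Ha Hb Hab E; exact (Hab (Hinj a b Ha Hb E)). Qed.

Lemma injective_of_enumeration {Q T : Type} (D : nat -> Prop) (e : nat -> Q)
    (f : Q -> T) :
  is_enumeration D e ->
  (forall a b, D a -> D b -> a <> b -> f (e a) <> f (e b)) ->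
  forall x y, x <> y -> f x <> f y.
Proof.
intros [_ [_ [_ Hsurj]]] Hf x y Hxy.
destruct (Hsurj x) as [a [Ha <-]], (Hsurj y) as [b [Hb <-]].
apply Hf; auto; intros ->; exact (Hxy eq_refl).
Qed.

Lemma orbit_injective_of_semi_latin {Q : Type} (op : Q -> Q -> Q) (qhat : Q)
    (iota : Q -> R) (rho : Q -> R -> R) :
  semi_latin_at op qhat -> rho_on_image op iota rho ->
  (forall x y, x <> y -> iota x <> iota y) ->
  forall q r, q <> r -> rho q (iota qhat) <> rho r (iota qhat).
Proof.
intros Hsl Hrho Hiota q r Hqr; rewrite !Hrho.
apply Hiota; intro E; exact (Hqr (Hsl q r E)).
Qed.

Lemma ord_eq12 (x d : R) : ord x x d = 0%Z.
Proof. unfold ord; destruct (Req_EM_T x x) as [_ | Hxx]; [reflexivity | now contradiction Hxx]. Qed.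

Lemma exists_third_index (a b : nat) : exists d, (d <= 2 /\ d <> a /\ d <> b)%nat.
Proof.
destruct (Nat.eq_dec a 0), (Nat.eq_dec b 0), (Nat.eq_dec a 1), (Nat.eq_dec b 1);
  solve [exists 0%nat; lia | exists 1%nat; lia | exists 2%nat; lia].
Qed.

Section CircularRealization.

Variables (Q : Type) (c : Q -> Q -> Q -> Z) (D : nat -> Prop) (e : nat -> Q)
  (iota : Q -> R).
Hypothesis c_eq0 : forall a b d, c a b d = 0%Z -> a = b \/ b = d \/ a = d.
Hypothesis Henum : is_enumeration D e.
Hypothesis Hreal : is_circ_realization c D e iota.

Lemma circ_realization_index_inj a b :
  D a -> D b -> a <> b -> iota (e a) <> iota (e b).
Proof.
intros Ha Hb Hab E.
assert (Hmax : D (max a b)) by (apply Nat.max_case; assumption).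
destruct Hreal as [_ [H01 Hgen]].
destruct (le_lt_dec 2 (max a b)) as [Hge2 | Hlt2].
- destruct (Hgen _ Hge2 Hmax) as [i [j [_ [_ [_ [_ [_ Hc]]]]]]].
  destruct (exists_third_index a b) as [d [Hd2 [Hda Hdb]]].
  assert (Hd : D d) by (apply (enumeration_dom_le D e (max a b)); auto; lia).
  specialize (Hc a b d (Nat.le_max_l _ _) (Nat.le_max_r _ _) ltac:(lia)).
  rewrite E, ord_eq12 in Hc.
  destruct (c_eq0 _ _ _ Hc) as [H | [H | H]];
    refine (enumeration_neq D e _ _ Henum _ _ _ H); auto.
- assert (HD1 : D 1%nat) by (apply (enumeration_dom_le D e (max a b)); auto; lia).
  apply (H01 HD1).
  destruct a as [|[|a]], b as [|[|b]]; try lia; auto.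
Qed.

End CircularRealization.

Section RightRealization.

Variables (Q : Type) (lt : Q -> Q -> Prop) (D : nat -> Prop) (e : nat -> Q)
  (iota : Q -> R).
Hypothesis lt_irrefl : forall a, ~ lt a a.
Hypothesis lt_trans : forall a b d, lt a b -> lt b d -> lt a d.
Hypothesis lt_total : forall a b, a <> b -> lt a b \/ lt b a.
Hypothesis Henum : is_enumeration D e.
Hypothesis Hreal : is_right_realization lt D e iota.

Definition iota_respects (i j : nat) : Prop :=
  lt (e i) (e j) -> iota (e i) < iota (e j).

Definition iota_monotone_upto (n : nat) : Prop :=
  forall i j, (i <= n)%nat -> (j <= n)%nat -> iota_respects i j.

Definition new_point_placed (n : nat) : Prop :=
  forall k, (k <= n)%nat -> iota_respects k (S n) /\ iota_respects (S n) k.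

Lemma lt_asym a b : lt a b -> ~ lt b a.
Proof. intros Hab Hba; exact (lt_irrefl a (lt_trans _ _ _ Hab Hba)). Qed.

Lemma new_point_above_all n :
  (forall i, (i <= n)%nat -> lt (e i) (e (S n))) ->
  (exists m, (forall j, (j <= n)%nat -> iota (e j) <= iota (e m)) /\
             iota (e (S n)) = iota (e m) + 1) ->
  new_point_placed n.
Proof.
intros Hbelow [m [Hmax Heq]] k Hk; split; intro Hlt.
- pose proof (Hmax k Hk); lra.
- exfalso; exact (lt_asym _ _ (Hbelow k Hk) Hlt).
Qed.

Lemma new_point_below_all n :
  (forall i, (i <= n)%nat -> lt (e (S n)) (e i)) ->
  (exists m, (forall j, (j <= n)%nat -> iota (e m) <= iota (e j)) /\
             iota (e (S n)) = iota (e m) - 1) ->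
  new_point_placed n.
Proof.
intros Habove [m [Hmin Heq]] k Hk; split; intro Hlt.
- exfalso; exact (lt_asym _ _ (Habove k Hk) Hlt).
- pose proof (Hmin k Hk); lra.
Qed.

Lemma new_point_between n a b :
  D (S n) -> iota_monotone_upto n -> (a <= n)%nat -> (b <= n)%nat ->
  lt (e a) (e (S n)) -> lt (e (S n)) (e b) ->
  (forall k, (k <= n)%nat ->
     ~ (lt (e a) (e k) /\ lt (e k) (e (S n))) /\
     ~ (lt (e (S n)) (e k) /\ lt (e k) (e b))) ->
  iota (e (S n)) = (iota (e a) + iota (e b)) / 2 ->
  new_point_placed n.
Proof.
intros HSn Hmono Ha Hb Hla Hlb Hgap Heq.
assert (Hab : iota (e a) < iota (e b)) by (apply Hmono; eauto).
assert (Hneq : forall k l, (k <= n)%nat -> (l <= n)%nat -> k <> l -> e k <> e l)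
  by (intros k l Hk Hl; apply (enumeration_neq D e); auto;
      apply (enumeration_dom_le D e (S n)); auto; lia).
intros k Hk; split; intro Hlt.
- destruct (Nat.eq_dec k a) as [-> | Hka]; [lra |].
  destruct (lt_total _ _ (Hneq k a Hk Ha Hka)) as [Hka' | Hak].
  + pose proof (Hmono k a Hk Ha Hka'); lra.
  + exfalso; exact (proj1 (Hgap k Hk) (conj Hak Hlt)).
- destruct (Nat.eq_dec k b) as [-> | Hkb]; [lra |].
  destruct (lt_total _ _ (Hneq k b Hk Hb Hkb)) as [Hkb' | Hbk].
  + exfalso; exact (proj2 (Hgap k Hk) (conj Hlt Hkb')).
  + pose proof (Hmono b k Hb Hk Hbk); lra.
Qed.

Lemma new_point_placed_of_monotone n :
  D (S n) -> iota_monotone_upto n -> new_point_placed n.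
Proof.
intros HSn Hmono.
destruct (Hreal (S n) ltac:(lia) HSn) as [Hmin [Hmax Hmid]].
assert (Hcmp : forall i, (i <= n)%nat -> lt (e i) (e (S n)) \/ lt (e (S n)) (e i)).
{ intros i Hi; apply lt_total, (enumeration_neq D e); auto; [| lia].
  apply (enumeration_dom_le D e (S n)); auto. }
destruct (classic (exists i, (i < S n)%nat /\ lt (e i) (e (S n)))) as [Hl | Hl];
  destruct (classic (exists j, (j < S n)%nat /\ lt (e (S n)) (e j))) as [Hg | Hg].
- destruct (Hmid Hl Hg) as [a [b [Ha [Hb [Hla [Hlb [Hgap Heq]]]]]]].
  apply (new_point_between n a b); auto; try lia.
  intros k Hk; apply Hgap; lia.
- assert (Hbelow : forall i, (i <= n)%nat -> lt (e i) (e (S n))).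
  { intros i Hi; destruct (Hcmp i Hi) as [H | H]; auto.
    exfalso; apply Hg; exists i; split; [lia | exact H]. }
  apply new_point_above_all; auto.
  destruct Hmax as [m [_ [Hmaxm Heq]]]; [intros i Hi; apply Hbelow; lia |].
  exists m; split; auto; intros j Hj; apply Hmaxm; lia.
- assert (Habove : forall i, (i <= n)%nat -> lt (e (S n)) (e i)).
  { intros i Hi; destruct (Hcmp i Hi) as [H | H]; auto.
    exfalso; apply Hl; exists i; split; [lia | exact H]. }
  apply new_point_below_all; auto.
  destruct Hmin as [m [_ [Hminm Heq]]]; [intros i Hi; apply Habove; lia |].
  exists m; split; auto; intros j Hj; apply Hminm; lia.
- exfalso; destruct (Hcmp 0%nat ltac:(lia)) as [H | H];
    [apply Hl | apply Hg]; exists 0%nat; split; auto; lia.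
Qed.

Lemma right_realization_monotone n : D n -> iota_monotone_upto n.
Proof.
induction n as [| n IH]; intros Hn i j Hi Hj Hlt.
- replace i with 0%nat in * by lia; replace j with 0%nat in * by lia.
  exfalso; exact (lt_irrefl _ Hlt).
- assert (Hmono : iota_monotone_upto n)
    by (apply IH, (enumeration_dom_le D e (S n)); auto).
  pose proof (new_point_placed_of_monotone n Hn Hmono) as Hnew.
  destruct (Nat.eq_dec i (S n)) as [-> | Hin], (Nat.eq_dec j (S n)) as [-> | Hjn].
  + exfalso; exact (lt_irrefl _ Hlt).
  + apply (proj2 (Hnew j ltac:(lia))), Hlt.
  + apply (proj1 (Hnew i ltac:(lia))), Hlt.
  + apply Hmono; auto; lia.
Qed.

Lemma right_realization_index_inj a b :
  D a -> D b -> a <> b -> iota (e a) <> iota (e b).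
Proof.
intros Ha Hb Hab E.
assert (Hmono : iota_monotone_upto (max a b))
  by (apply right_realization_monotone, Nat.max_case; assumption).
destruct (lt_total _ _ (enumeration_neq D e a b Henum Ha Hb Hab)) as [H | H].
- pose proof (Hmono a b (Nat.le_max_l _ _) (Nat.le_max_r _ _) H); lra.
- pose proof (Hmono b a (Nat.le_max_r _ _) (Nat.le_max_l _ _) H); lra.
Qed.

End RightRealization.

Theorem proposition3p7 :
  forall (Q : Type) (op : Q -> Q -> Q) (qhat : Q)
         (D : nat -> Prop) (e : nat -> Q),
    is_quandle op ->
    semi_latin_at op qhat ->
    is_enumeration D e ->
    e 0%nat = qhat ->
    (* circular order case *)
    (forall (c : Q -> Q -> Q -> Z) (iota : Q -> R) (rho : Q -> R -> R),
        is_circular_order op c ->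
        is_circ_realization c D e iota ->
        rho_on_image op iota rho ->
        forall q r, q <> r -> rho q (iota qhat) <> rho r (iota qhat)) /\
    (* right order case *)
    (forall (lt : Q -> Q -> Prop) (iota : Q -> R) (rho : Q -> R -> R),
        is_right_order op lt ->
        is_right_realization lt D e iota ->
        rho_on_image op iota rho ->
        forall q r, q <> r -> rho q (iota qhat) <> rho r (iota qhat)).
Proof.
intros Q op qhat D e _ Hsl Henum _; split.
- intros c iota rho [_ [Hc0 _]] Hreal Hrho.
  apply (orbit_injective_of_semi_latin op qhat iota rho Hsl Hrho).
  apply (injective_of_enumeration D e iota Henum).
  apply (circ_realization_index_inj Q c D e iota); auto.
  intros a b d; apply Hc0.
- intros lt iota rho [Hirr [Htr [Htot _]]] Hreal Hrho.
  apply (orbit_injective_of_semi_latin op qhat iota rho Hsl Hrho).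
  apply (injective_of_enumeration D e iota Henum).
  exact (right_realization_index_inj Q lt D e iota Hirr Htr Htot Henum Hreal).
Qed.
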